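(* Let $n$ be a positive integer and let $\mathcal F$ be an $\mathcal N$-saturated family of subsets of $[n]$. Let $A'\subseteq[n]$ with $A'\notin\mathcal F$, and suppose there exists $A\in\mathcal F$ with $A'\subset A$, and that $A'$ is a maximal element of some induced copy of $\mathcal N$ in $\mathcal F\cup\{A'\}$. Then there exists an induced copy of $\mathcal N$ in $\mathcal F\cup\{A'\}$ in which $A'$ is a maximal element and the other maximal element is a subset of $A$.
   Context: The poset $\mathcal N$ has four elements $a,b,c,d$ with $a<c$, $b<c$, $b<d$ and no other comparabilities (so $a,b$ are its minimal elements and $c,d$ its maximal elements). A family $\mathcal Q$ of sets (ordered by inclusion) contains an induced copy of $\mathcal N$ if there are distinct sets in $\mathcal Q$ whose inclusion relations are exactly those of $a,b,c,d$ above. A family $\mathcal F$ of subsets of $[n]=\{1,\dots,n\}$ is $\mathcal N$-saturated if $\mathcal F$ contains no induced copy of $\mathcal N$, but for every $S\subseteq[n]$ with $S\notin\mathcal F$, the family $\mathcal F\cup\{S\}$ contains an induced copy of $\mathcal N$. *)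

From mathcomp Require Import all_boot.
Set Implicit Arguments. Unset Strict Implicit. Unset Printing Implicit Defensive.

Definition comparableS (n : nat) (x y : {set 'I_n}) : bool :=
  (x \subset y) || (y \subset x).

Definition inducedN (n : nat) (a b c d : {set 'I_n}) : Prop :=
  [/\ uniq [:: a; b; c; d],
      a \proper c, b \proper c, b \proper d &
      [/\ ~~ comparableS a b, ~~ comparableS a d & ~~ comparableS c d]].

(* Q contains an induced copy of N with sets a,b,c,d (c,d maximal). *)
Definition copyN (n : nat) (Q : {set {set 'I_n}}) (a b c d : {set 'I_n}) : Prop :=
  [/\ a \in Q, b \in Q, c \in Q, d \in Q & inducedN a b c d].

Definition containsN (n : nat) (Q : {set {set 'I_n}}) : Prop :=
  exists a b c d, copyN Q a b c d.

Definition N_saturated (n : nat) (F : {set {set 'I_n}}) : Prop :=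
  ~ containsN F /\ forall S : {set 'I_n}, S \notin F -> containsN (S |: F).

From mathcomp Require Import all_boot.

(* If A' plays c in the copy (a, b, A', d), then d ⊆ A, for otherwise
   (a, b, A, d) would be a copy of N inside F.  If A' plays d, then a ⊆ A for
   the same reason, and c may be replaced by the intersection Z of all members
   of F containing a and b, which satisfies a ∪ b ⊆ Z ⊆ c ∩ A.  It remains to
   see that Z ∈ F.  This holds for the intersection Z of the members of F above
   any subfamily s of F: a copy of N in Z |: F must use Z, and Z can then be
   replaced by a member of s (if Z is minimal in the copy) or by a member of F
   above s (if Z is maximal), giving a copy of N inside F.  So adding Z creates
   no copy of N, and saturation forces Z ∈ F. *)

Set Implicit Arguments.
Unset Strict Implicit.
Unset Printing Implicit Defensive.

Lemma mem_setU1_neq (T : finType) (X y : T) (F : {set T}) :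
  y \in X |: F -> y != X -> y \in F.
Proof. by case/setU1P => [-> | //]; rewrite eqxx. Qed.

Lemma nsubsetWl (T : finType) (x y z : {set T}) :
  x \subset y -> ~~ (x \subset z) -> ~~ (y \subset z).
Proof. by move=> xy; apply: contra; apply: subset_trans. Qed.

Lemma nsubsetWr (T : finType) (x y z : {set T}) :
  y \subset z -> ~~ (x \subset z) -> ~~ (x \subset y).
Proof. by move=> yz; apply: contra => /subset_trans; apply. Qed.

Section InducedN.

Variable n : nat.
Implicit Types a b c d x y : {set 'I_n}.

Lemma inducedNE a b c d : inducedN a b c d <->
  [/\ [/\ a \proper c, b \proper c & b \proper d],
      [/\ ~~ (a \subset b), ~~ (b \subset a) & ~~ (a \subset d)] &
      [/\ ~~ (d \subset a), ~~ (c \subset d) & ~~ (d \subset c)]].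
Proof.
split.
  case=> _ -> -> ->; rewrite /comparableS !negb_or.
  by case=> /andP[-> ->] /andP[-> ->] /andP[-> ->].
case=> [[ac bc bd] [nab nba nad] [nda ncd ndc]].
have nsub_neq x y : ~~ (x \subset y) -> x != y by apply: contraNneq => ->.
have proper_neq x y : x \proper y -> x != y by rewrite properEneq => /andP[].
split; rewrite /comparableS ?negb_or ?nab ?nba ?nad ?nda ?ncd ?ndc //=.
by rewrite !inE !negb_or (nsub_neq _ _ nab) (nsub_neq _ _ nad) (nsub_neq _ _ ncd)
  !proper_neq.
Qed.

Lemma inducedN_neq a b c d : inducedN a b c d ->
  [/\ a != b, a != c, a != d & [/\ b != c, b != d & c != d]].
Proof.
case=> /= + _ _ _ _; rewrite !inE !negb_or.
by case/and4P => /and3P[-> -> ->] /andP[-> ->] -> _.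
Qed.

Lemma inducedN_shrink_a a b c d x :
  x \subset a -> ~~ (x \subset d) -> inducedN a b c d -> inducedN x b c d.
Proof.
move=> xa nxd /inducedNE[[ac bc bd] [nab nba nad] [nda ncd ndc]].
apply/inducedNE; split; split=> //.
- exact: sub_proper_trans xa ac.
- exact: nsubsetWr (proper_sub bd) nxd.
- exact: nsubsetWr xa nba.
- exact: nsubsetWr xa nda.
Qed.

Lemma inducedN_shrink_b a b c d x :
  x \subset b -> ~~ (x \subset a) -> inducedN a b c d -> inducedN a x c d.
Proof.
move=> xb nxa /inducedNE[[ac bc bd] [nab nba nad] [nda ncd ndc]].
apply/inducedNE; split; split=> //.
- exact: sub_proper_trans xb bc.
- exact: sub_proper_trans xb bd.
- exact: nsubsetWr xb nab.
Qed.

Lemma inducedN_shrink_c a b c d x :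
  a \subset x -> b \subset x -> x \subset c ->
  inducedN a b c d -> inducedN a b x d.
Proof.
move=> ax bx xc /inducedNE[[ac bc bd] [nab nba nad] [nda ncd ndc]].
apply/inducedNE; split; split=> //.
- by rewrite properE ax; exact: nsubsetWl bx nba.
- by rewrite properE bx; exact: nsubsetWl ax nab.
- exact: nsubsetWl ax nad.
- exact: nsubsetWr xc ndc.
Qed.

Lemma inducedN_grow_c a b c d y :
  c \subset y -> ~~ (d \subset y) -> inducedN a b c d -> inducedN a b y d.
Proof.
move=> cy ndy /inducedNE[[ac bc bd] [nab nba nad] [nda ncd ndc]].
apply/inducedNE; split; split=> //.
- exact: proper_sub_trans ac cy.
- exact: proper_sub_trans bc cy.
- exact: nsubsetWl cy ncd.
Qed.

Lemma inducedN_grow_d a b c d y :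
  d \subset y -> ~~ (a \subset y) -> inducedN a b c d -> inducedN a b c y.
Proof.
move=> dy nay /inducedNE[[ac bc bd] [nab nba nad] [nda ncd ndc]].
apply/inducedNE; split; split=> //.
- exact: proper_sub_trans bd dy.
- exact: nsubsetWl dy nda.
- exact: nsubsetWl (proper_sub ac) nay.
- exact: nsubsetWl dy ndc.
Qed.

End InducedN.

Definition hull (T : finType) (F : {set {set T}}) (s : seq {set T}) : {set T} :=
  \bigcap_(y in F | all (fun x : {set T} => x \subset y) s) y.

Section Hull.

Variables (T : finType) (F : {set {set T}}) (s : seq {set T}).
Implicit Types x y z : {set T}.

Lemma sub_hull x : x \in s -> x \subset hull F s.
Proof. by move=> xs; apply/bigcapsP => y /andP[_ /allP]; apply. Qed.

Lemma hull_min y :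
  y \in F -> all (fun x : {set T} => x \subset y) s -> hull F s \subset y.
Proof. by move=> yF ys; apply: bigcap_inf; rewrite yF. Qed.

Lemma hull_witness z : ~~ (z \subset hull F s) ->
  exists2 y, y \in F & all (fun x : {set T} => x \subset y) s && ~~ (z \subset y).
Proof.
move=> nzh; apply/exists_inP; apply: contraR nzh => /exists_inPn noy.
by apply/bigcapsP => y /andP[yF ys]; move: (noy y yF); rewrite ys negbK.
Qed.

End Hull.

Section NFree.

Variables (n : nat) (F : {set {set 'I_n}}).
Hypothesis NF : ~ containsN F.
Implicit Types a b c d y : {set 'I_n}.

Lemma no_inducedN a b c d :
  a \in F -> b \in F -> c \in F -> d \in F -> ~ inducedN a b c d.
Proof. by move=> aF bF cF dF abcd; apply: NF; exists a, b, c, d. Qed.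

Lemma above_c_above_d a b c d y : a \in F -> b \in F -> d \in F -> y \in F ->
  c \subset y -> inducedN a b c d -> d \subset y.
Proof.
move=> aF bF dF yF cy abcd; apply/negPn/negP => ndy.
exact: no_inducedN aF bF yF dF (inducedN_grow_c cy ndy abcd).
Qed.

Lemma above_d_above_a a b c d y : a \in F -> b \in F -> c \in F -> y \in F ->
  d \subset y -> inducedN a b c d -> a \subset y.
Proof.
move=> aF bF cF yF dy abcd; apply/negPn/negP => nay.
exact: no_inducedN aF bF cF yF (inducedN_grow_d dy nay abcd).
Qed.

Variable s : seq {set 'I_n}.
Hypothesis sF : all (mem F) s.
Local Notation Z := (hull F s).

Lemma no_inducedN_hull_a b c d : b \in F -> c \in F -> d \in F -> ~ inducedN Z b c d.
Proof.
move=> bF cF dF Zbcd; have /inducedNE[_ [_ _ nZd] _] := Zbcd.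
apply: (negP nZd); apply: hull_min => //; apply/allP => x xs.
apply/negPn/negP => nxd.
have xF : x \in F := allP sF x xs.
exact: no_inducedN xF bF cF dF (inducedN_shrink_a (sub_hull F xs) nxd Zbcd).
Qed.

Lemma no_inducedN_hull_b a c d : a \in F -> c \in F -> d \in F -> ~ inducedN a Z c d.
Proof.
move=> aF cF dF aZcd; have /inducedNE[_ [_ nZa _] _] := aZcd.
apply: (negP nZa); apply: hull_min => //; apply/allP => x xs.
apply/negPn/negP => nxa.
have xF : x \in F := allP sF x xs.
exact: no_inducedN aF xF cF dF (inducedN_shrink_b (sub_hull F xs) nxa aZcd).
Qed.

Lemma no_inducedN_hull_c a b d : a \in F -> b \in F -> d \in F -> ~ inducedN a b Z d.
Proof.
move=> aF bF dF abZd; have /inducedNE[_ _ [_ _ ndZ]] := abZd.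
have [y yF /andP[ys ndy]] := hull_witness ndZ.
exact: no_inducedN aF bF yF dF (inducedN_grow_c (hull_min yF ys) ndy abZd).
Qed.

Lemma no_inducedN_hull_d a b c : a \in F -> b \in F -> c \in F -> ~ inducedN a b c Z.
Proof.
move=> aF bF cF abcZ; have /inducedNE[_ [_ _ naZ] _] := abcZ.
have [y yF /andP[ys nay]] := hull_witness naZ.
exact: no_inducedN aF bF cF yF (inducedN_grow_d (hull_min yF ys) nay abcZ).
Qed.

Lemma hull_setU1_Nfree : ~ containsN (Z |: F).
Proof.
move=> [a [b [c [d [ha hb hc hd abcd]]]]].
have [nab nac nad [nbc nbd ncd]] := inducedN_neq abcd.
have inF y : y \in Z |: F -> y != Z -> y \in F := @mem_setU1_neq _ _ _ _.
have [aZ | /(inF _ ha) aF] := eqVneq a Z.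
  by subst a; apply: no_inducedN_hull_a abcd; apply: inF; rewrite // eq_sym.
have [bZ | /(inF _ hb) bF] := eqVneq b Z.
  by subst b; apply: no_inducedN_hull_b abcd; apply: inF; rewrite // eq_sym.
have [cZ | /(inF _ hc) cF] := eqVneq c Z.
  by subst c; apply: no_inducedN_hull_c abcd; apply: inF; rewrite // eq_sym.
have [dZ | /(inF _ hd) dF] := eqVneq d Z.
  by subst d; apply: no_inducedN_hull_d abcd.
exact: no_inducedN aF bF cF dF abcd.
Qed.

End NFree.

Lemma hull_mem (n : nat) (F : {set {set 'I_n}}) (s : seq {set 'I_n}) :
  N_saturated F -> all (mem F) s -> hull F s \in F.
Proof.
case=> NF saturated sF; apply/negPn/negP => /saturated.
exact: hull_setU1_Nfree.
Qed.

Theorem lemma3p1 (n : nat) (F : {set {set 'I_n}}) (A' A : {set 'I_n}) :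
  0 < n ->
  N_saturated F ->
  A' \notin F ->
  A \in F -> A' \proper A ->
  (exists a b c d, copyN (A' |: F) a b c d /\ (c = A' \/ d = A')) ->
  exists a b c d, copyN (A' |: F) a b c d /\
    ((c = A' /\ d \subset A) \/ (d = A' /\ c \subset A)).
Proof.
move=> _ satF _ AF /proper_sub A'A [a [b [c [d [[ha hb hc hd abcd] cdA']]]]].
have [NF _] := satF; case: cdA' => [cA' | dA'].
  subst c; have [_ naA' _ [nbA' _ nA'd]] := inducedN_neq abcd.
  have aF := mem_setU1_neq ha naA'; have bF := mem_setU1_neq hb nbA'.
  have dF : d \in F by apply: (mem_setU1_neq hd); rewrite eq_sym.
  exists a, b, A', d; split; first by split.
  left; split=> //; exact: (above_c_above_d NF aF bF dF AF A'A abcd).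
subst d; have [_ _ naA' [_ nbA' ncA']] := inducedN_neq abcd.
have aF := mem_setU1_neq ha naA'; have bF := mem_setU1_neq hb nbA'.
have cF := mem_setU1_neq hc ncA'.
have /inducedNE[[/proper_sub ac /proper_sub bc /proper_sub bA'] _ _] := abcd.
have aA : a \subset A := (above_d_above_a NF aF bF cF AF A'A abcd).
set Z := hull F [:: a; b].
have ZF : Z \in F by apply: hull_mem; rewrite //= aF bF.
have aZ : a \subset Z by apply: sub_hull; rewrite mem_head.
have bZ : b \subset Z by apply: sub_hull; rewrite !inE eqxx orbT.
exists a, b, Z, A'; split.
  split; rewrite ?setU11 ?setU1r //.
  by apply: inducedN_shrink_c aZ bZ _ abcd; apply: hull_min; rewrite //= ac bc.
by right; split=> //; apply: hull_min; rewrite //= aA (subset_trans bA' A'A).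
Qed.
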